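(* There is an absolute constant $c$ such that the following holds. Let $2\pi>\theta_1>\theta_2>\dots>\theta_m>0$ and $s_\ell=\sum_{j=1}^\ell\theta_j$. Then $$\max_{1\le\ell\le m}\Big|\sum_{j=1}^\ell e^{is_j}\Big|\le c\big(\theta_m^{-1}+(2\pi-\theta_1)^{-1}\big).$$ *)

From Stdlib Require Import Reals.
Open Scope R_scope.

Fixpoint psum (f : nat -> R) (l : nat) : R :=
  match l with
  | O => 0
  | S k => psum f k + f (S k)
  end.

Definition svals (theta : nat -> R) (l : nat) : R := psum theta l.

Definition cmod (x y : R) : R := sqrt (x ^ 2 + y ^ 2).

(* | sum_{j=1}^l e^{i s_j} |, with e^{i t} = cos t + i sin t *)
Definition expsum_mod (theta : nat -> R) (l : nat) : R :=
  cmod (psum (fun j => cos (svals theta j)) l)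
       (psum (fun j => sin (svals theta j)) l).

(* The theorem is a summation-by-parts estimate.  Write e(t) = cos t + i sin t
   and k(t) = cot (t/2).  For 0 < t < 2 pi the number a(t) = (1 - i k(t)) / 2
   equals 1 / (1 - e(-t)), hence every term of the sum satisfies
        e(s_j) = a(theta_j) (e(s_j) - e(s_{j-1})).
   Abel summation then bounds | sum_{j <= l} e(s_j) | by
        |a(theta_l)| + |a(theta_1)| + sum_j |a(theta_{j+1}) - a(theta_j)|.
   Since the theta_j decrease, k(theta_j) increases, so the last sum telescopes
   to (k(theta_l) - k(theta_1)) / 2, and everything is controlled by the
   cosecants 1 / sin (theta_j / 2) <= 6 (1/theta_m + 1/(2 pi - theta_1)). *)

From Stdlib Require Import Reals Lra Lia Psatz.
From Coquelicot Require Import Coquelicot.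
Open Scope R_scope.

(* Elementary lower bound from the cubic Taylor polynomial sin a >= a - a^3/6. *)
Lemma sin_ge_third a : 0 <= a -> a <= PI / 2 -> a / 3 <= sin a.
Proof.
  intros Ha0 Ha1.
  assert (Hcubic := proj1 (sin_bound a 0 Ha0 ltac:(lra))).
  cbv [sin_approx sum_f_R0 sin_term] in Hcubic; simpl in Hcubic.
  assert (Ha2 : a <= 2) by (assert (H := PI_4); lra).
  assert (0 <= a * (4 - a * a)) by (apply Rmult_le_pos; nra).
  nra.
Qed.

Lemma inv_sin_half_le t :
  0 < t < 2 * PI -> / sin (t / 2) <= 6 * (/ t + / (2 * PI - t)).
Proof.
  intros Ht.
  assert (Hpos : 0 < sin (t / 2)) by (apply sin_gt_0; lra).
  assert (0 < / t) by (apply Rinv_0_lt_compat; lra).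
  assert (0 < / (2 * PI - t)) by (apply Rinv_0_lt_compat; lra).
  destruct (Rle_lt_dec (t / 2) (PI / 2)) as [Hle | Hgt].
  - assert (Hlow := sin_ge_third (t / 2) ltac:(lra) Hle).
    assert (/ sin (t / 2) <= / (t / 2 / 3)) by (apply Rinv_le_contravar; lra).
    replace (/ (t / 2 / 3)) with (6 * / t) in * by (field; lra).
    lra.
  - rewrite <- sin_PI_x in Hpos |- *.
    assert (Hlow := sin_ge_third (PI - t / 2) ltac:(lra) ltac:(lra)).
    assert (/ sin (PI - t / 2) <= / ((PI - t / 2) / 3))
      by (apply Rinv_le_contravar; lra).
    replace (/ ((PI - t / 2) / 3)) with (6 * / (2 * PI - t)) in * by (field; lra).
    lra.
Qed.

Lemma inv_sin_half_le_between lo t hi :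
  0 < lo -> lo <= t -> t <= hi -> hi < 2 * PI ->
  / sin (t / 2) <= 6 * (/ lo + / (2 * PI - hi)).
Proof.
  intros Hlo Hlt Hth Hhi.
  assert (/ t <= / lo) by (apply Rinv_le_contravar; lra).
  assert (/ (2 * PI - t) <= / (2 * PI - hi)) by (apply Rinv_le_contravar; lra).
  assert (Hcsc := inv_sin_half_le t ltac:(lra)).
  lra.
Qed.

(* The cosecant is at least 1; this dominates the constant terms of the bound. *)
Lemma one_le_inv_sin_half t : 0 < t < 2 * PI -> 1 <= / sin (t / 2).
Proof.
  intros Ht. rewrite <- Rinv_1 at 1.
  apply Rinv_le_contravar; [apply sin_gt_0; lra | apply SIN_bound].
Qed.

(* cot (t/2), the coefficient appearing in the inverse of 1 - e^{-it}. *)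
Definition cot_half (t : R) : R := cos (t / 2) / sin (t / 2).

Lemma cot_half_bound t : 0 < t < 2 * PI -> Rabs (cot_half t) <= / sin (t / 2).
Proof.
  intros Ht.
  assert (Hpos : 0 < sin (t / 2)) by (apply sin_gt_0; lra).
  unfold cot_half; set (h := t / 2) in *; unfold Rdiv.
  rewrite Rabs_mult, (Rabs_right (/ sin h))
    by (left; apply Rinv_0_lt_compat; exact Hpos).
  assert (Rabs (cos h) <= 1) by (apply Rabs_le; apply COS_bound).
  assert (0 < / sin h) by (apply Rinv_0_lt_compat; exact Hpos).
  nra.
Qed.

(* cot (t/2) is decreasing on (0, 2 pi): sin ((b - a)/2) >= 0 is exactly
   cot (a/2) - cot (b/2) >= 0 after clearing denominators. *)
Lemma cot_half_decr a b : 0 < a -> a < b -> b < 2 * PI -> cot_half b <= cot_half a.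
Proof.
  intros Ha Hab Hb. unfold cot_half.
  assert (Sa : 0 < sin (a / 2)) by (apply sin_gt_0; lra).
  assert (Sb : 0 < sin (b / 2)) by (apply sin_gt_0; lra).
  assert (D : 0 <= sin (b / 2 - a / 2)) by (apply sin_ge_0; lra).
  rewrite sin_minus in D.
  apply Rmult_le_reg_r with (sin (a / 2) * sin (b / 2)); [nra |].
  field_simplify; lra.
Qed.

Definition cexp (t : R) : C := (cos t, sin t).

Lemma Cmod_cexp t : Cmod (cexp t) = 1.
Proof.
  unfold Cmod, cexp; simpl.
  replace (cos t * (cos t * 1) + sin t * (sin t * 1)) with (Rsqr (sin t) + Rsqr (cos t))
    by (unfold Rsqr; ring).
  rewrite sin2_cos2. exact sqrt_1.
Qed.

Lemma Cmod_pair_le x y : Cmod (x, y) <= Rabs x + Rabs y.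
Proof.
  replace (x, y) with (RtoC x + RtoC y * Ci)%C
    by (apply injective_projections; simpl; ring).
  eapply Rle_trans; [apply Cmod_triangle |].
  rewrite Cmod_mult, Cmod_Ci, !Cmod_R. lra.
Qed.

Fixpoint csum (f : nat -> C) (l : nat) : C :=
  match l with
  | O => 0%C
  | S k => (csum f k + f (S k))%C
  end.

Lemma csum_S (f : nat -> C) l : csum f (S l) = (csum f l + f (S l))%C.
Proof. reflexivity. Qed.

Lemma csum_pair (f g : nat -> R) l :
  csum (fun j => (f j, g j)) l = (psum f l, psum g l).
Proof.
  induction l as [| l IH]; [reflexivity |].
  simpl; rewrite IH; reflexivity.
Qed.

Lemma csum_ext (f g : nat -> C) l :
  (forall j, (1 <= j <= l)%nat -> f j = g j) -> csum f l = csum g l.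
Proof.
  induction l as [| l IH]; intros Hfg; [reflexivity |].
  simpl; rewrite (Hfg (S l)) by lia.
  rewrite IH; [reflexivity | intros j Hj; apply Hfg; lia].
Qed.

Lemma Cmod_csum_le (f : nat -> C) l : Cmod (csum f l) <= psum (fun j => Cmod (f j)) l.
Proof.
  induction l as [| l IH]; cbn [csum psum].
  - rewrite Cmod_0; lra.
  - eapply Rle_trans; [apply Cmod_triangle | lra].
Qed.

Lemma psum_ext (f g : nat -> R) l :
  (forall j, (1 <= j <= l)%nat -> f j = g j) -> psum f l = psum g l.
Proof.
  induction l as [| l IH]; intros Hfg; [reflexivity |].
  simpl; rewrite (Hfg (S l)) by lia.
  rewrite IH; [reflexivity | intros j Hj; apply Hfg; lia].
Qed.

Lemma psum_telescope (f : nat -> R) n : psum (fun j => f (S j) - f j) n = f (S n) - f 1%nat.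
Proof. induction n as [| n IH]; simpl; [ring | rewrite IH; ring]. Qed.

Lemma abel_summation (a w : nat -> C) n :
  csum (fun j => a j * (w j - w (pred j)))%C (S n)
  = (a (S n) * w (S n) - a 1%nat * w O - csum (fun j => (a (S j) - a j) * w j) n)%C.
Proof.
  induction n as [| n IH].
  - simpl; ring.
  - rewrite (csum_S _ (S n)), IH, (csum_S _ n); simpl pred; ring.
Qed.

Lemma abel_bound (a w : nat -> C) n :
  (forall j, Cmod (w j) <= 1) ->
  Cmod (csum (fun j => a j * (w j - w (pred j)))%C (S n))
  <= Cmod (a (S n)) + Cmod (a 1%nat) + psum (fun j => Cmod (a (S j) - a j)%C) n.
Proof.
  intros Hw.
  assert (Hterm : forall (b z : C), Cmod z <= 1 -> Cmod (b * z)%C <= Cmod b).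
  { intros b z Hz. rewrite Cmod_mult.
    assert (H := Cmod_ge_0 b). assert (H' := Cmod_ge_0 z). nra. }
  assert (Hsum : Cmod (csum (fun j => (a (S j) - a j) * w j)%C n)
                 <= psum (fun j => Cmod (a (S j) - a j)%C) n).
  { eapply Rle_trans; [apply Cmod_csum_le |].
    induction n as [| n IH]; simpl; [lra |].
    apply Rplus_le_compat; [exact IH | apply Hterm, Hw]. }
  rewrite abel_summation.
  eapply Rle_trans; [apply Cmod_triangle |]; rewrite Cmod_opp.
  eapply Rle_trans; [apply Rplus_le_compat_r, Cmod_triangle |]; rewrite Cmod_opp.
  assert (Cmod (a (S n) * w (S n))%C <= Cmod (a (S n))) by apply Hterm, Hw.
  assert (Cmod (a 1%nat * w O)%C <= Cmod (a 1%nat)) by apply Hterm, Hw.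
  lra.
Qed.

(* abel_coef t = (1 - i cot (t/2)) / 2 = 1 / (1 - e(-t)). *)
Definition abel_coef (t : R) : C := (1 / 2, - cot_half t / 2).

(* e(u + t) = a(t) (e(u + t) - e(u)); with v = u + t/2 both exponentials are
   e(v +- t/2), and the identity reduces to the addition formulas. *)
Lemma cexp_step u t :
  0 < t < 2 * PI -> cexp (u + t) = (abel_coef t * (cexp (u + t) - cexp u))%C.
Proof.
  intros Ht.
  assert (Hs : sin (t / 2) <> 0) by (apply Rgt_not_eq, sin_gt_0; lra).
  unfold cexp, abel_coef, cot_half.
  set (h := t / 2) in *.
  replace (u + t) with ((u + h) + h) by (unfold h; field).
  replace (cos u) with (cos ((u + h) - h)) by (f_equal; ring).
  replace (sin u) with (sin ((u + h) - h)) by (f_equal; ring).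
  set (v := u + h).
  rewrite cos_plus, sin_plus, cos_minus, sin_minus.
  apply injective_projections; simpl; field; exact Hs.
Qed.

Lemma Cmod_abel_coef t : Cmod (abel_coef t) <= (1 + Rabs (cot_half t)) / 2.
Proof.
  eapply Rle_trans; [apply Cmod_pair_le |].
  rewrite Rabs_right by lra.
  unfold Rdiv; rewrite Rabs_mult, Rabs_Ropp, (Rabs_right (/ 2)) by lra.
  lra.
Qed.

(* Consecutive coefficients differ by a purely imaginary number, so their
   distance is half the (signed) increment of cot (t/2). *)
Lemma Cmod_abel_coef_sub s t :
  cot_half t <= cot_half s -> Cmod (abel_coef s - abel_coef t)%C = (cot_half s - cot_half t) / 2.
Proof.
  intros Hst.
  replace (abel_coef s - abel_coef t)%C with (RtoC ((cot_half s - cot_half t) / 2) * - Ci)%C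
    by (unfold abel_coef; apply injective_projections; simpl; field).
  rewrite Cmod_mult, Cmod_opp, Cmod_Ci, Cmod_R, Rabs_right by lra.
  ring.
Qed.

Lemma expsum_mod_Cmod theta l :
  expsum_mod theta l = Cmod (csum (fun j => cexp (svals theta j)) l).
Proof. unfold expsum_mod, cexp. rewrite csum_pair. reflexivity. Qed.

Lemma decreasing_between (theta : nat -> R) m :
  (forall j, (1 <= j)%nat -> (j < m)%nat -> theta (S j) < theta j) ->
  forall i j, (1 <= i)%nat -> (i <= j)%nat -> (j <= m)%nat -> theta j <= theta i.
Proof.
  intros Hdec i j Hi Hij Hjm.
  induction j as [| j IH]; [lia |].
  destruct (Nat.eq_dec i (S j)) as [-> | Hij_ne]; [lra |].
  assert (theta (S j) < theta j) by (apply Hdec; lia).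
  assert (theta j <= theta i) by (apply IH; lia).
  lra.
Qed.

Lemma expsum_mod_le_cot (theta : nat -> R) n :
  (forall j, (1 <= j <= S n)%nat -> 0 < theta j < 2 * PI) ->
  (forall j, (1 <= j)%nat -> (j <= n)%nat -> theta (S j) < theta j) ->
  expsum_mod theta (S n) <= 1 + Rabs (cot_half (theta (S n))) + Rabs (cot_half (theta 1%nat)).
Proof.
  intros Hrange Hdec.
  set (a j := abel_coef (theta j)).
  set (w j := cexp (svals theta j)).
  assert (Hmono : forall j, (1 <= j <= n)%nat -> cot_half (theta j) <= cot_half (theta (S j))).
  { intros j Hj. apply cot_half_decr; [apply Hrange; lia | apply Hdec; lia | apply Hrange; lia]. }
  assert (Hvar : psum (fun j => Cmod (a (S j) - a j)%C) n
                 = (cot_half (theta (S n)) - cot_half (theta 1%nat)) / 2).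
  { rewrite (psum_ext _ (fun j => cot_half (theta (S j)) / 2 - cot_half (theta j) / 2)).
    - rewrite (psum_telescope (fun j => cot_half (theta j) / 2)); field.
    - intros j Hj; unfold a; rewrite Cmod_abel_coef_sub by (apply Hmono; lia); field. }
  assert (Habel : csum (fun j => cexp (svals theta j)) (S n)
                  = csum (fun j => a j * (w j - w (pred j)))%C (S n)).
  { apply csum_ext; intros [| j] Hj; [lia |].
    apply (cexp_step (svals theta j)), Hrange; lia. }
  rewrite expsum_mod_Cmod, Habel.
  eapply Rle_trans; [apply abel_bound; intros; unfold w; rewrite Cmod_cexp; lra |].
  rewrite Hvar.
  assert (H1 := Cmod_abel_coef (theta (S n))).
  assert (H2 := Cmod_abel_coef (theta 1%nat)).
  assert (H3 := Rle_abs (cot_half (theta (S n)))).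
  assert (- cot_half (theta 1%nat) <= Rabs (cot_half (theta 1%nat)))
    by (rewrite <- Rabs_Ropp; apply Rle_abs).
  unfold a; lra.
Qed.

Theorem mainTheorem15 :
  exists c : R,
    forall (m : nat) (theta : nat -> R),
      (1 <= m)%nat ->
      theta 1%nat < 2 * PI ->
      (forall j : nat, (1 <= j)%nat -> (j < m)%nat -> theta (S j) < theta j) ->
      0 < theta m ->
      forall l : nat, (1 <= l)%nat -> (l <= m)%nat ->
        expsum_mod theta l <= c * (/ theta m + / (2 * PI - theta 1%nat)).
Proof.
  exists 18. intros m theta Hm Hfirst Hdec Hlast l Hl1 Hlm.
  assert (Hrange : forall j, (1 <= j <= m)%nat -> theta m <= theta j <= theta 1%nat)
    by (intros j Hj; split; apply (decreasing_between theta m Hdec); lia).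
  assert (Hcot : forall j, (1 <= j <= m)%nat ->
            Rabs (cot_half (theta j)) <= 6 * (/ theta m + / (2 * PI - theta 1%nat))).
  { intros j Hj; destruct (Hrange j Hj).
    eapply Rle_trans; [apply cot_half_bound | apply inv_sin_half_le_between]; lra. }
  assert (Hone : 1 <= 6 * (/ theta m + / (2 * PI - theta 1%nat))).
  { destruct (Hrange 1%nat ltac:(lia)).
    eapply Rle_trans; [apply (one_le_inv_sin_half (theta m)) |
                       apply inv_sin_half_le_between]; lra. }
  destruct l as [| n]; [lia |].
  eapply Rle_trans; [apply expsum_mod_le_cot |].
  - intros j Hj; destruct (Hrange j ltac:(lia)); lra.
  - intros j Hj1 Hjn; apply Hdec; lia.
  - assert (H1 := Hcot (S n) ltac:(lia)); assert (H2 := Hcot 1%nat ltac:(lia)); lra.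
Qed.
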